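(* Let $1 \leq p < +\infty$ and let $\mathbb{P}$ be a Borel probability measure over $\mathbb{R}$ (i.e. a probability measure defined on the Borel $\sigma$-algebra $\mathcal{B}_{\mathbb{R}}$ of $\mathbb{R}$). Then for every real number $M \geq 0$, the set of $M$-sensitive random variables is dense in $L^{p}(\mathbb{R}, \mathcal{B}_{\mathbb{R}}, \mathbb{P})$ with respect to the $L^{p}$-norm: for every $X \in L^{p}(\mathbb{R}, \mathcal{B}_{\mathbb{R}}, \mathbb{P})$ and every $\varepsilon > 0$ there is an $M$-sensitive random variable $Y$ with $\|Y - X\|_{L^{p}(\mathbb{P})} < \varepsilon$.
   Context: A Borel random variable on $\mathbb{R}$ is an $\mathbb{R}$-valued Borel-measurable function defined on $\mathbb{R}$. Given a real number $M \geq 0$, a Borel random variable $Y$ on $\mathbb{R}$ is called $M$-sensitive if and only if $Y \in L^{\infty}(\mathbb{R}, \mathcal{B}_{\mathbb{R}}, \mathbb{P})$, $Y$ is differentiable at Lebesgue-almost every point of $\mathbb{R}$, and $|Y'(x)| > M$ at every point $x$ at which $Y$ is differentiable. *)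

From HB Require Import structures.
From mathcomp Require Import all_boot all_order all_algebra.
From mathcomp Require Import all_classical all_reals all_analysis.

Set Implicit Arguments.
Unset Strict Implicit.
Unset Printing Implicit Defensive.
Import Order.TTheory GRing.Theory Num.Theory.
Local Open Scope classical_set_scope.
Local Open Scope ring_scope.

(* A Borel random variable on R is a function R -> R; the measurable space
   structure on R in mathcomp-analysis is the Borel sigma-algebra. *)
Definition M_sensitive (R : realType) (P : probability R R) (M : R)
    (Y : R -> R) : Prop :=
  [/\ Y \in Lfun P +oo%E,
      {ae (@lebesgue_measure R), forall x, derivable Y x 1}
    & forall x : R, derivable Y x 1 -> M < `| derive1 Y x |].

From HB Require Import structures.
From mathcomp Require Import all_boot all_order all_algebra.
From mathcomp Require Import all_classical all_reals all_analysis.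
From mathcomp Require Import measurable_realfun ess_sup_inf.
From mathcomp Require Import ring lra zify.
Set Implicit Arguments.
Unset Strict Implicit.
Unset Printing Implicit Defensive.

Import numFieldNormedType.Exports.
Import Order.TTheory GRing.Theory Num.Theory.
Local Open Scope classical_set_scope.
Local Open Scope ring_scope.

(* Approximate X in L^p by a bounded function x |-> G (floor (x / h)),
   constant on the cells [k h, (k + 1) h) of a grid of small mesh h, and add the
   sawtooth L (x - k h) of slope L = M + 1, which moves it by at most L h in sup
   norm.  The sum is bounded, differentiable off the countable grid, and affine
   of slope L to the right of every point, so its derivative is L wherever it
   exists.
   Such grid approximations exist for every small mesh: the Borel sets that are
   close in P-measure to a union of cells for every small mesh form a
   sigma-algebra containing the intervals ]a, b] (only the two boundary cells
   are wrong, and P (]a, a + h[) -> 0 as h -> 0+); this passes to simple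
   functions, then to bounded functions, then to L^p functions by truncation
   and dominated convergence. *)

Lemma measurableY d (T : measurableType d) (A B : set T) :
  measurable A -> measurable B -> measurable (A `+` B).
Proof. by move=> mA mB; apply: measurableU; apply: measurableD. Qed.

Lemma setY_sub_trans T (A B C : set T) : A `+` C `<=` (A `+` B) `|` (B `+` C).
Proof. by move=> x /=; have [Bx|Bx] := pselect (B x); tauto. Qed.

Lemma setYUU T (A B C D : set T) :
  (A `|` B) `+` (C `|` D) `<=` (A `+` C) `|` (B `+` D).
Proof. by move=> x /=; tauto. Qed.

Lemma setYCC T (A B : set T) : ~` A `+` ~` B = A `+` B.
Proof. by rewrite /setY !setDE !setCK setUC (setIC (~` B)) (setIC (~` A)). Qed.

Lemma normr_indicB T (R : realType) (A B : set T) x :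
  `|\1_A x - \1_B x| = \1_(A `+` B) x :> R.
Proof.
rewrite !indicE; have [xA|xA] := pselect (A x); have [xB|xB] := pselect (B x).
- by rewrite (mem_set xA) (mem_set xB) memNset ?subrr ?normr0 //=; tauto.
- by rewrite (mem_set xA) (memNset xB) mem_set ?subr0 ?normr1 //=; tauto.
- rewrite (memNset xA) (mem_set xB) mem_set ?sub0r ?normrN ?normr1 //=.
  by tauto.
- by rewrite (memNset xA) (memNset xB) memNset ?subrr ?normr0 //=; tauto.
Qed.

Lemma le_measure_setU2 d (T : measurableType d) (R : realType)
    (mu : {measure set T -> \bar R}) (A B C : set T) :
  measurable A -> measurable B -> measurable C -> C `<=` A `|` B ->
  (mu C <= mu A + mu B)%E.
Proof.
move=> mA mB mC CAB; apply: le_trans (measureU2 _ mA mB).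
by apply: le_measure; rewrite ?inE//; exact: measurableU.
Qed.

Lemma cvge0_ex_lt (R : realType) (u : nat -> \bar R) (c : R) :
  u n @[n --> \oo] --> 0%E -> 0 < c -> exists n, (u n < c%:E)%E.
Proof.
move=> u0 c0; have /u0 : ereal_nbhs 0%E [set y | (y < c%:E)%E].
  by apply: open_ereal_lt'; rewrite lte_fin.
by move=> /(@filter_ex _ \oo _ [set n | (u n < c%:E)%E]); apply.
Qed.

Section Lnorm_bounds.
Context d (T : measurableType d) (R : realType).
Context (mu : {measure set T -> \bar R}).

Lemma Lfun_infty_bounded (f : T -> R) (M : R) :
  measurable_fun setT f -> (forall x, `|f x| <= M) -> f \in Lfun mu +oo.
Proof.
move=> mf fM; rewrite inE; apply/andP; split; first by rewrite inE.
rewrite inE /= /finite_norm unlock /=; case: ifPn => _; last by rewrite ltry.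
apply: (@le_lt_trans _ _ M%:E); last by rewrite ltry.
by rewrite (_ : abse \o _ = EFin \o (Num.norm \o f)) //; exact: ess_sup_ler.
Qed.

Context (p : R).
Hypothesis p_gt0 : 0 < p.

Local Notation Np f := ('N[mu]_p%:E [EFin \o (f)%R])%E.

Lemma Lnorm_le_integral (f : T -> R) (e : R) : 0 <= e ->
  (\int[mu]_x (`|f x| `^ p)%:E <= (e `^ p)%:E)%E -> (Np f <= e%:E)%E.
Proof.
move=> e0 fe; rewrite unlock /=.
apply: le_trans (gt0_ler_poweR (r := p^-1) _ _ _ fe) _.
- by rewrite invr_ge0 ltW.
- rewrite in_itv /= leey andbT.
  by apply: integral_ge0 => x _; rewrite lee_fin powR_ge0.
- by rewrite in_itv /= leey andbT lee_fin powR_ge0.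
by rewrite poweR_EFin -powRrM mulfV ?gt_eqF// powRr1.
Qed.

Lemma Lnorm_le_indic (f : T -> R) (B : set T) (c e : R) :
  measurable_fun setT f -> measurable B -> 0 <= c -> 0 <= e ->
  (forall x, `|f x| <= c * \1_B x) ->
  ((c `^ p)%:E * mu B <= (e `^ p)%:E)%E -> (Np f <= e%:E)%E.
Proof.
move=> mf mB c0 e0 fB cBe; apply: Lnorm_le_integral => //; apply: le_trans cBe.
rewrite -(setIT B) -integral_indic// -ge0_integralZl_EFin ?powR_ge0//.
2: by apply/measurable_EFinP; exact: measurable_indic.
apply: ge0_le_integral => //.
- apply/measurable_EFinP; apply: (measurableT_comp (measurable_powR _)).
  exact: measurableT_comp.
- by apply: measurable_funeM; apply/measurable_EFinP; exact: measurable_indic.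
move=> x _; rewrite -EFinM lee_fin; have := fB x; rewrite indicE.
case: (x \in B) => /=; rewrite ?mulr1 ?mulr0 => fxc.
  by apply: ge0_ler_powR => //; exact: ltW.
rewrite (_ : `|f x| = 0) ?powR0 ?gt_eqF//.
by apply/le_anti; rewrite fxc normr_ge0.
Qed.

End Lnorm_bounds.

Section Lnorm_probability.
Context {R : realType} (P : probability R R) (p : R).
Hypothesis p_ge1 : 1 <= p.

Let p_gt0 : 0 < p. Proof. exact: lt_le_trans ltr01 p_ge1. Qed.

Local Notation Np f := ('N[P]_p%:E [EFin \o (f)%R])%E.

Lemma Lnorm_le_sup (f : R -> R) (c : R) : measurable_fun setT f ->
  (forall x, `|f x| <= c) -> (Np f <= c%:E)%E.
Proof.
move=> mf fc; have c0 : 0 <= c by apply: le_trans (fc 0).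
apply: (Lnorm_le_indic p_gt0 (B := [set: R]) (c := c)) => //.
  by move=> x; rewrite indicE mem_set// mulr1.
by rewrite [X in (_ * X)%E]probability_setT mule1.
Qed.

Lemma Lnorm_addr_lt (f g : R -> R) (a b : R) :
  measurable_fun setT f -> measurable_fun setT g ->
  (Np f < a%:E)%E -> (Np g < b%:E)%E ->
  (Np (fun x => f x + g x) < (a + b)%:E)%E.
Proof.
move=> mf mg fa gb; apply: le_lt_trans (minkowski_EFin P mf mg p_ge1) _.
by rewrite EFinD lteD.
Qed.

End Lnorm_probability.

Section grid.
Context {R : realType} (h : R).
Hypothesis h_gt0 : 0 < h.

Definition cell (x : R) : int := Num.floor (x / h).

Definition sawtooth (x : R) : R := x - (cell x)%:~R * h.

Lemma cell_itv x : (cell x)%:~R * h <= x < (cell x)%:~R * h + h.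
Proof.
have := floor_itv (x / h).
by rewrite ler_pdivlMr// ltr_pdivrMr// intrD mulrDl mul1r.
Qed.

Lemma cellP k x : k%:~R * h <= x < k%:~R * h + h -> cell x = k.
Proof.
move=> kx; apply/eqP.
by rewrite floor_eq ler_pdivlMr// ltr_pdivrMr// intrD mulrDl mul1r.
Qed.

Lemma le_cell x y : x <= y -> cell x <= cell y.
Proof. by move=> xy; apply: le_floor; rewrite ler_pM2r ?invr_gt0. Qed.

Lemma measurable_cell_pred (Q : set int) : measurable (cell @^-1` Q).
Proof.
have -> : cell @^-1` Q =
    \bigcup_k (if `[< Q k >] then cell @^-1` [set k] else set0).
  apply/seteqP; split => [x Qx|x [k _]].
    by exists (cell x) => //; rewrite asboolT.
  by case: asboolP => // Qk /= ->.
apply: countable_bigcupT_measurable => // k; case: asboolP => // _.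
rewrite (_ : _ @^-1` _ = `[k%:~R * h, k%:~R * h + h[%classic) //.
apply/seteqP; split => x /=; rewrite in_itv /=; last exact: cellP.
by move=> <-; exact: cell_itv.
Qed.

Lemma measurable_fun_cell (G : int -> R) : measurable_fun setT (G \o cell).
Proof.
by move=> _ B _; rewrite setTI; exact: (measurable_cell_pred (G @^-1` B)).
Qed.

Lemma sawtooth_itv x : 0 <= sawtooth x < h.
Proof. by have /andP[] := cell_itv x; rewrite /sawtooth; lra. Qed.

Lemma measurable_sawtooth : measurable_fun setT sawtooth.
Proof.
apply: measurable_funB => //.
exact: (measurable_fun_cell (fun k => k%:~R * h)).
Qed.

End grid.

Section grid_approx_set.
Context {R : realType} (P : probability R R).

(* Asking for a good union of cells at every small mesh, rather than at one,
   makes the notion stable under finite unions and, below, under sums. *)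
Definition grid_approx_set (A : set R) := measurable A /\
  forall e : R, 0 < e -> \forall h \near 0^'+,
    exists S : set int, (P (A `+` cell h @^-1` S) < e%:E)%E.

Lemma grid_approx_set0 : grid_approx_set set0.
Proof.
split => // e e0; apply: nearW => h; exists set0.
by rewrite preimage_set0 setYK measure0 lte_fin.
Qed.

Lemma grid_approx_setC A : grid_approx_set A -> grid_approx_set (~` A).
Proof.
case=> mA Aapprox; split => [|e /Aapprox]; first exact: measurableC.
by apply: filterS => h [S PS]; exists (~` S); rewrite preimage_setC setYCC.
Qed.

Lemma grid_approx_setU A B :
  grid_approx_set A -> grid_approx_set B -> grid_approx_set (A `|` B).
Proof.
case=> mA Aapprox [mB Bapprox]; split => [|e e0]; first exact: measurableU.
have e2 : 0 < e / 2 by rewrite divr_gt0.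
apply: filterS3 (nbhs_right_gt 0) (Aapprox _ e2) (Bapprox _ e2).
move=> h h0 [S PS] [T PT].
exists (S `|` T); rewrite preimage_setU.
have mc := measurable_cell_pred h0.
apply: le_lt_trans (le_measure_setU2 P _ _ _ (@setYUU _ A B _ _)) _.
- exact: measurableY.
- exact: measurableY.
- by apply: measurableY; apply: measurableU.
by rewrite [e]splitr EFinD lteD.
Qed.

Lemma grid_approx_set_bigsetU (A : nat -> set R) n :
  (forall i, grid_approx_set (A i)) ->
  grid_approx_set (\big[setU/set0]_(i < n) A i).
Proof.
move=> Aapprox; elim: n => [|n IHn].
  by rewrite big_ord0; exact: grid_approx_set0.
by rewrite big_ord_recr /=; exact: grid_approx_setU.
Qed.

Lemma grid_approx_set_closed A : measurable A ->
  (forall e : R, 0 < e ->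
    exists2 B, grid_approx_set B & (P (A `+` B) < e%:E)%E) ->
  grid_approx_set A.
Proof.
move=> mA Aapprox; split => // e e0; have e2 : 0 < e / 2 by rewrite divr_gt0.
have [B [mB Bapprox] PAB] := Aapprox _ e2.
apply: filterS2 (nbhs_right_gt 0) (Bapprox _ e2) => h h0 [S PS].
have mc := measurable_cell_pred h0.
exists S.
apply: le_lt_trans (le_measure_setU2 P _ _ _ (@setY_sub_trans _ _ B _)) _.
- exact: measurableY.
- exact: measurableY.
- exact: measurableY.
by rewrite [e]splitr EFinD lteD.
Qed.

Lemma grid_approx_set_bigcup (A : nat -> set R) :
  (forall i, grid_approx_set (A i)) -> grid_approx_set (\bigcup_i A i).
Proof.
move=> Aapprox; have mA i : measurable (A i) by case: (Aapprox i).
pose U := \bigcup_i A i; pose B n := \bigcup_(i in `I_n) A i.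
have mU : measurable U by exact: bigcupT_measurable.
have mB n : measurable (B n) by apply: bigcup_measurable => i _.
have UBE n : U `+` B n = U `\` B n.
  apply/seteqP; split => [x [//|[[i _ Aix] nUx]]|x]; last by left.
  by case: nUx; exists i.
have /cvge0_ex_lt PUB : P (U `\` B n) @[n --> \oo] --> 0%E.
  rewrite -(measure0 P) -(_ : \bigcap_n (U `\` B n) = set0); last first.
    apply/seteqP; split => x // UBx; have [[i _ Aix] _] := UBx 0%N I.
    by have [_] := UBx i.+1 I; apply; exists i => /=.
  apply: nonincreasing_cvg_mu => //.
  - by rewrite (le_lt_trans (probability_le1 _ _)) ?ltry//; exact: measurableD.
  - by move=> n; exact: measurableD.
  - by apply: bigcapT_measurable => n; exact: measurableD.
  - move=> m n mn; apply/subsetPset; apply: setDS => x [i /= im Aix].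
    by exists i => //=; exact: leq_trans mn.
apply: grid_approx_set_closed => // e /PUB[n PUBn]; exists (B n) => //.
  by rewrite /B bigcup_mkord; exact: grid_approx_set_bigsetU.
by rewrite UBE.
Qed.

Lemma measure_itvoo_right_small (a e : R) : 0 < e ->
  \forall h \near 0^'+, (P `]a, (a + h)%R[%classic < e%:E)%E.
Proof.
move=> e0; pose F n := `]a, a + n.+1%:R^-1[%classic.
have /cvge0_ex_lt/(_ e0)[n PFn] : P (F n) @[n --> \oo] --> 0%E.
  rewrite -(measure0 P) -(_ : \bigcap_n F n = set0); last first.
    apply/seteqP; split => x // Fx.
    move: (Fx 0%N I); rewrite /F /= in_itv /= => /andP[ax _].
    have [k akx] := ltr_add_invr ax.
    move: (Fx k I); rewrite /F /= in_itv /= => /andP[_ /(lt_trans akx)].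
    by rewrite ltxx.
  apply: nonincreasing_cvg_mu => //.
  - by rewrite (le_lt_trans (probability_le1 P (measurable_itv _))) ?ltry.
  - by move=> k; exact: measurable_itv.
  - by apply: bigcapT_measurable => k; exact: measurable_itv.
  - move=> m k mk; apply/subsetPset; apply: subset_itvl.
    by rewrite bnd_simp lerD2l lef_pV2 ?posrE// ler_nat.
near=> h; apply: le_lt_trans PFn; apply: le_measure; rewrite ?inE//.
  exact: measurable_itv.
apply: subset_itvl; rewrite bnd_simp lerD2l.
by near: h; apply: nbhs_right_le.
Unshelve. all: by end_near. Qed.

Lemma grid_approx_set_itvoc (a b : R) : grid_approx_set `]a, b]%classic.
Proof.
split => [|e e0]; first exact: measurable_itv.
have e2 : 0 < e / 2 by rewrite divr_gt0.
apply: filterS3 (nbhs_right_gt 0) (measure_itvoo_right_small a e2)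
  (measure_itvoo_right_small b e2) => h h0 Pa Pb.
exists [set k : int | a < k%:~R * h <= b].
apply: le_lt_trans (le_measure_setU2 P (measurable_itv `]a, a + h[)
  (measurable_itv `]b, b + h[) _ _) _.
- by apply: measurableY => //; exact: measurable_cell_pred.
- move=> x; rewrite /= !in_itv /=; have /andP[kx xk] := cell_itv h0 x.
  case=> -[/andP[ax xb] /negP]; rewrite negb_and -!ltNge => /orP[]; lra.
- by rewrite [e]splitr EFinD lteD.
Qed.

Lemma measurable_grid_approx_set A : measurable A -> grid_approx_set A.
Proof.
move=> mA; have gsigma : sigma_algebra setT grid_approx_set.
  split; first exact: grid_approx_set0.
    by move=> B /grid_approx_setC; rewrite setTD.
  exact: grid_approx_set_bigcup.
apply: (smallest_sub gsigma _ mA) => _ [[a b] _ <-].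
exact: grid_approx_set_itvoc.
Qed.

End grid_approx_set.

Section grid_approx.
Context {R : realType} (P : probability R R) (p : R).
Hypothesis p_ge1 : 1 <= p.

Let p_gt0 : 0 < p. Proof. exact: lt_le_trans ltr01 p_ge1. Qed.

Local Notation Np f := ('N[P]_p%:E [EFin \o (f)%R])%E.

Definition grid_approx (f : R -> R) := measurable_fun setT f /\
  forall e : R, 0 < e -> \forall h \near 0^'+,
    exists2 G : int -> R, (exists M, forall k, `|G k| <= M) &
      (Np (fun x => G (cell h x) - f x) < e%:E)%E.

Lemma grid_approx0 : grid_approx (fun=> 0).
Proof.
split => // e e0; apply: nearW => h.
exists (fun=> 0); first by exists 0 => k; rewrite normr0.
apply: le_lt_trans (Lnorm_le_sup _ p_ge1 (c := 0) _ _) _ => //.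
by move=> x; rewrite subrr normr0.
Qed.

Lemma grid_approxD (f g : R -> R) : grid_approx f -> grid_approx g ->
  grid_approx (fun x => f x + g x).
Proof.
move=> [mf fapprox] [mg gapprox]; split => [|e e0].
  exact: measurable_funD.
have e2 : 0 < e / 2 by rewrite divr_gt0.
apply: filterS3 (nbhs_right_gt 0) (fapprox _ e2) (gapprox _ e2).
move=> h h0 [F [MF bF] NF] [G [MG bG] NG].
exists (fun k => F k + G k).
  by exists (MF + MG) => k; rewrite (le_trans (ler_normD _ _))// lerD.
rewrite [e]splitr.
have -> : (fun x => F (cell h x) + G (cell h x) - (f x + g x)) =
    (fun x => (F (cell h x) - f x) + (G (cell h x) - g x)).
  by apply/funext => x; ring.
apply: Lnorm_addr_lt => //; apply: measurable_funB => //.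
all: exact: measurable_fun_cell.
Qed.

Lemma grid_approx_sum (I : Type) (s : seq I) (F : I -> R -> R) :
  (forall i, grid_approx (F i)) -> grid_approx (fun x => \sum_(i <- s) F i x).
Proof.
move=> Fapprox; elim: s => [|i s IHs].
  by under eq_fun do rewrite big_nil; exact: grid_approx0.
by under eq_fun do rewrite big_cons; exact: grid_approxD.
Qed.

Lemma grid_approx_closed (f : R -> R) : measurable_fun setT f ->
  (forall e : R, 0 < e ->
    exists2 g : R -> R, grid_approx g & (Np (fun x => g x - f x) < e%:E)%E) ->
  grid_approx f.
Proof.
move=> mf fapprox; split => // e e0; have e2 : 0 < e / 2 by rewrite divr_gt0.
have [g [mg gapprox] Ngf] := fapprox _ e2.
apply: filterS2 (nbhs_right_gt 0) (gapprox _ e2) => h h0 [G bG NG].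
exists G => //; rewrite [e]splitr.
have -> : (fun x => G (cell h x) - f x) =
    (fun x => (G (cell h x) - g x) + (g x - f x)).
  by apply/funext => x; rewrite addrA subrK.
apply: Lnorm_addr_lt => //; apply: measurable_funB => //.
exact: measurable_fun_cell.
Qed.

Lemma grid_approx_scaled_indic (A : set R) (c : R) : grid_approx_set P A ->
  grid_approx (fun x => c * \1_A x).
Proof.
move=> [mA Aapprox]; split.
  by apply: measurable_funM => //; exact: measurable_indic.
move=> e e0; have e2 : 0 < e / 2 by rewrite divr_gt0.
pose q := `|c| `^ p; have q0 : 0 <= q by exact: powR_ge0.
pose d := (e / 2) `^ p / (q + 1).
have d0 : 0 < d by rewrite divr_gt0 ?powR_gt0// ltr_wpDl.
apply: filterS2 (nbhs_right_gt 0) (Aapprox _ d0) => h h0 [S PS].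
exists (fun k => c * \1_S k).
  exists `|c| => k; rewrite normrM ler_piMr// indicE.
  by case: (k \in S); rewrite ?normr1 ?normr0.
apply: le_lt_trans (Lnorm_le_indic p_gt0 (B := A `+` cell h @^-1` S)
  (c := `|c|) (e := e / 2) _ _ _ _ _ _) _.
- apply: measurable_funB.
    exact: (measurable_fun_cell h0 (fun k => c * \1_S k)).
  by apply: measurable_funM => //; exact: measurable_indic.
- by apply: measurableY => //; exact: measurable_cell_pred.
- exact: normr_ge0.
- exact: ltW.
- move=> x; rewrite -mulrBr normrM ler_wpM2l//.
  rewrite -[\1_S (cell h x)]/(\1_(cell h @^-1` S) x).
  by rewrite distrC normr_indicB.
- apply: le_trans (lee_wpmul2l _ (ltW PS)) _; first by rewrite lee_fin.
  rewrite -EFinM lee_fin /d mulrA ler_pdivrMr ?ltr_wpDl// mulrDr mulr1 mulrC.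
  by rewrite lerDl powR_ge0.
by rewrite lte_fin ltr_pdivrMr// ltr_pMr ?ltr1n.
Qed.

Lemma grid_approx_finite_range (f : R -> R) (r : seq R) :
  measurable_fun setT f -> (forall x, f x \in r) -> grid_approx f.
Proof.
move=> mf fr.
have -> : f = fun x => \sum_(y <- undup r) y * \1_(f @^-1` [set y]) x.
  apply/funext => x; rewrite (bigD1_seq (f x)) ?mem_undup ?undup_uniq //=.
  rewrite indicE mem_set// mulr1 big1 ?addr0// => y yfx.
  by rewrite indicE memNset ?mulr0 //= => fxy; rewrite fxy eqxx in yfx.
apply: grid_approx_sum => y.
apply/grid_approx_scaled_indic/measurable_grid_approx_set.
by rewrite -[_ @^-1` _]setTI; exact: mf.
Qed.

Lemma grid_approx_bounded (f : R -> R) (M : R) : measurable_fun setT f ->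
  (forall x, `|f x| <= M) -> grid_approx f.
Proof.
move=> mf fM; apply: grid_approx_closed => // e e0.
pose d := e / 2; have d0 : 0 < d by rewrite divr_gt0.
pose s x := (cell d (f x))%:~R * d.
have ms : measurable_fun setT s.
  exact: measurableT_comp (measurable_fun_cell d0 (fun k => k%:~R * d)) mf.
exists s.
  pose lo := cell d (- M).
  apply: (@grid_approx_finite_range _
    [seq (lo + i%:Z)%:~R * d | i <- iota 0 `|cell d M - lo|.+1] ms) => x.
  have /andP[loc chi] : lo <= cell d (f x) <= cell d M.
    by have := fM x; rewrite ler_norml => /andP[? ?]; rewrite !le_cell.
  move: loc chi; rewrite /s; set k := cell d (f x); set hi := cell d M.
  clearbody lo k hi => loc chi.
  apply/mapP; exists `|k - lo|%N; first by rewrite mem_iota; lia.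
  by congr (_%:~R * d); lia.
apply: le_lt_trans (Lnorm_le_sup _ p_ge1 (c := d) _ _) _.
- exact: measurable_funB.
- move=> x; have /andP[] := cell_itv d0 (f x).
  rewrite /s ler_norml => lex ltx.
  by apply/andP; split; lra.
by rewrite lte_fin /d; lra.
Qed.

Lemma grid_approx_Lfun (f : R -> R) : f \in Lfun P p%:E -> grid_approx f.
Proof.
move=> fLp; have mf : measurable_fun setT f.
  by have := sub_Lfun_mfun fLp; rewrite inE.
apply: grid_approx_closed => // e e0; have e2 : 0 < e / 2 by rewrite divr_gt0.
pose E n := (Num.norm \o f) @^-1` `]-oo, n%:R].
have mE n : measurable (E n).
  by rewrite /E -[X in measurable X]setTI; apply: (measurableT_comp _ mf).
pose fn n x := f x * \1_(E n) x.
have mfn n : measurable_fun setT (fn n).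
  by apply: measurable_funM => //; exact: measurable_indic.
have fn_bound n x : `|fn n x| <= n%:R.
  rewrite /fn indicE; case: (boolP (x \in E n)) => [|_].
    by rewrite inE /E /= in_itv /= mulr1.
  by rewrite mulr0 normr0.
have fn_dom n x : `|fn n x - f x| <= `|f x|.
  rewrite /fn indicE; case: (x \in E n); first by rewrite mulr1 subrr normr0.
  by rewrite mulr0 sub0r normrN.
have fn_cvg x : \forall n \near \oo, fn n x = f x.
  near=> n; rewrite /fn indicE mem_set ?mulr1 // /E /= in_itv /=.
  by near: n; exact: nbhs_infty_ger.
pose gn n x := (`|fn n x - f x| `^ p)%:E.
have := @dominated_convergence _ _ _ P setT measurableT gn (cst 0%E)
  (fun x => (`|f x| `^ p)%:E) _ (measurable_cst _) _
  (Lfun_integrable p_ge1 fLp) _.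
case.
- move=> n; apply/measurable_EFinP.
  apply: (measurableT_comp (measurable_powR _)).
  by apply: measurableT_comp => //; exact: measurable_funB.
- apply: aeW => x _; apply: cvg_near_cst; apply: filterS (fn_cvg x) => n fnx.
  by rewrite /gn fnx subrr normr0 powR0 ?gt_eqF.
- apply: aeW => x n _; rewrite /gn abse_EFin ger0_norm ?powR_ge0// lee_fin.
  by apply: ge0_ler_powR; rewrite ?nnegrE ?(ltW p_gt0)//; exact: fn_dom.
move=> _ gn0 _; have [n gnn] := cvge0_ex_lt gn0 (powR_gt0 p e2).
exists (fn n); first exact: grid_approx_bounded (mfn n) (fn_bound n).
apply: le_lt_trans (Lnorm_le_integral p_gt0 (ltW e2) _) _; last first.
  by rewrite lte_fin ltr_pdivrMr// ltr_pMr ?ltr1n.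
apply: ltW; move: gnn; congr (_ < _)%E; apply: eq_integral => x _.
by rewrite /gn sube0 abse_EFin ger0_norm ?powR_ge0.
Unshelve. all: by end_near. Qed.

End grid_approx.

Section grid_ramp.
Context {R : realType} (h L : R) (G : int -> R).
Hypothesis h_gt0 : 0 < h.

Definition grid_ramp (x : R) : R := G (cell h x) + L * sawtooth h x.

Lemma grid_ramp_shift x y :
  cell h y = cell h x -> grid_ramp y = grid_ramp x + L * (y - x).
Proof. by move=> yx; rewrite /grid_ramp /sawtooth yx; ring. Qed.

Lemma near_right_cell x : \forall t \near 0^'+, cell h (t + x) = cell h x.
Proof.
have /andP[cx xc] := cell_itv h_gt0 x.
near=> t; apply: cellP => //.
have t0 : 0 < t by near: t; exact: nbhs_right_gt.
have : t < (cell h x)%:~R * h + h - x by near: t; apply: nbhs_right_lt; lra.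
lra.
Unshelve. all: by end_near. Qed.

Lemma near_cell (x : R) : ~ range (fun k : int => k%:~R * h) x ->
  \forall y \near x, cell h y = cell h x.
Proof.
move=> xgrid; have /andP[cx xc] := cell_itv h_gt0 x.
have cx' : (cell h x)%:~R * h < x.
  rewrite lt_neqAle cx andbT; apply/eqP => xE.
  by apply: xgrid; exists (cell h x).
have : x \in `](cell h x)%:~R * h, (cell h x)%:~R * h + h[.
  by rewrite in_itv /= cx'.
move=> /near_in_itvoo; apply: filterS => y; rewrite in_itv /= => /andP[yl yr].
by apply: cellP => //; rewrite yr ltW.
Qed.

Lemma is_derive_grid_ramp (x : R) : ~ range (fun k : int => k%:~R * h) x ->
  is_derive x 1 grid_ramp L.
Proof.
move=> /near_cell xcell.
apply: (@near_eq_is_derive _ _ _ (fun y => grid_ramp x + L * (y - x))).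
  by near=> y; rewrite (@grid_ramp_shift x y) //; near: y.
by apply: is_derive_eq; rewrite add0r mul1r subr0 -[RHS]mulr1.
Unshelve. all: by end_near. Qed.

Lemma derive1_grid_ramp x : derivable grid_ramp x 1 -> derive1 grid_ramp x = L.
Proof.
move=> dx; rewrite derive1E /derive (cvg_at_rightE _ _ dx).
apply: cvg_lim => //; apply: cvg_near_cst; near=> t.
have t0 : 0 < t by near: t; exact: nbhs_right_gt.
rewrite /= [t *: 1]mulr1 (@grid_ramp_shift x).
  by rewrite addrAC subrr add0r addrK [_ *: _]mulrCA mulVf ?gt_eqF ?mulr1.
by near: t; exact: near_right_cell.
Unshelve. all: by end_near. Qed.

Lemma ae_derivable_grid_ramp :
  {ae lebesgue_measure, forall x, derivable grid_ramp x 1}.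
Proof.
have grid_countable : countable (range (fun k : int => k%:~R * h)).
  exact: (sub_countable (card_image_le _ _)).
exists (range (fun k : int => k%:~R * h)); split.
- exact: countable_measurable.
- exact: countable_lebesgue_measure0.
- move=> x /= ndx; apply: contrapT => xgrid; apply: ndx.
  by have [] := is_derive_grid_ramp xgrid.
Qed.

Lemma measurable_grid_ramp : measurable_fun setT grid_ramp.
Proof.
apply: measurable_funD; first exact: measurable_fun_cell.
by apply: measurable_funM => //; exact: measurable_sawtooth.
Qed.

Lemma grid_ramp_bounded M : (forall k, `|G k| <= M) ->
  forall x, `|grid_ramp x| <= M + `|L| * h.
Proof.
move=> GM x; apply: le_trans (ler_normD _ _) _; apply: lerD => //.
have /andP[saw0 sawh] := sawtooth_itv h_gt0 x.
by rewrite normrM (ger0_norm saw0) ler_wpM2l// ltW.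
Qed.

End grid_ramp.

Section sensitive_approximation.
Context {R : realType} (P : probability R R).

Lemma M_sensitive_grid_ramp (M h L : R) (G : int -> R) : 0 < h -> M < L ->
  (exists B, forall k, `|G k| <= B) -> M_sensitive P M (grid_ramp h L G).
Proof.
move=> h0 ML [B GB]; split.
- exact: Lfun_infty_bounded (measurable_grid_ramp L G h0)
    (grid_ramp_bounded L h0 GB).
- exact: ae_derivable_grid_ramp.
- by move=> x /(derive1_grid_ramp h0) ->; exact: lt_le_trans ML (ler_norm L).
Qed.

Context (p : R).
Hypothesis p_ge1 : 1 <= p.

Local Notation Np f := ('N[P]_p%:E [EFin \o (f)%R])%E.

Lemma Lnorm_grid_ramp_subr_lt (h L e : R) (G : int -> R) (f : R -> R) :
  0 < h -> measurable_fun setT f ->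
  (Np (fun x => G (cell h x) - f x) < e%:E)%E ->
  (Np (fun x => grid_ramp h L G x - f x) < (e + `|L| * h)%:E)%E.
Proof.
move=> h0 mf NG.
have -> : (fun x => grid_ramp h L G x - f x) =
    (fun x => (G (cell h x) - f x) + L * sawtooth h x).
  by apply/funext => x; rewrite /grid_ramp addrAC.
have msaw : measurable_fun setT (fun x => L * sawtooth h x).
  by apply: measurable_funM => //; exact: measurable_sawtooth.
apply: le_lt_trans (minkowski_EFin P _ msaw p_ge1) _.
  by apply: measurable_funB => //; exact: measurable_fun_cell.
have Nsaw : (Np (fun x => L * sawtooth h x) <= (`|L| * h)%:E)%E.
  apply: (Lnorm_le_sup P p_ge1) => // x.
  have /andP[saw0 sawh] := sawtooth_itv h0 x.
  by rewrite normrM (ger0_norm saw0) ler_wpM2l// ltW.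
rewrite EFinD lte_leD // ge0_fin_numE ?Lnorm_ge0 //.
exact: le_lt_trans Nsaw (ltry _).
Qed.

Lemma Lfun_grid_ramp_approx (f : R -> R) (L e : R) :
  f \in Lfun P p%:E -> 0 < e ->
  exists h G, [/\ 0 < h, exists B, forall k : int, `|G k| <= B &
    (Np (fun x => grid_ramp h L G x - f x) < e%:E)%E].
Proof.
move=> fLp e0; have [mf fapprox] := grid_approx_Lfun p_ge1 fLp.
have e2 : 0 < e / 2 by rewrite divr_gt0.
have Lh_small : \forall h \near 0^'+, `|L| * h <= e / 2.
  have eL : 0 < e / 2 / (`|L| + 1) by rewrite divr_gt0 // ltr_wpDl.
  near=> h; have h0 : 0 < h by near: h; exact: nbhs_right_gt.
  have : h <= e / 2 / (`|L| + 1) by near: h; exact: nbhs_right_le.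
  rewrite ler_pdivlMr ?ltr_wpDl // => /(le_trans _); apply.
  by rewrite mulrDr mulr1 mulrC lerDl ltW.
have [h [h0 hL [G bG NG]]] := filter_ex
  (filterS3 _ (fun h a b c => And3 a b c) (nbhs_right_gt 0) Lh_small
    (fapprox _ e2)).
exists h, G; split => //.
apply: lt_le_trans (Lnorm_grid_ramp_subr_lt _ h0 mf NG) _.
by rewrite lee_fin; lra.
Unshelve. all: by end_near. Qed.

End sensitive_approximation.

Theorem theorem1 (R : realType) (p : R) (P : probability R R) :
  1 <= p ->
  forall M : R, 0 <= M ->
  forall X : R -> R, X \in Lfun P p%:E ->
  forall eps : R, 0 < eps ->
  exists Y : R -> R, M_sensitive P M Y /\
    ('N[P]_p%:E [EFin \o (fun x => Y x - X x)%R] < eps%:E)%E.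
Proof.
move=> p_ge1 M _ X XLp eps eps0.
have [h [G [h0 bG NG]]] := Lfun_grid_ramp_approx p_ge1 (M + 1) XLp eps0.
exists (grid_ramp h (M + 1) G); split => //.
by apply: M_sensitive_grid_ramp => //; rewrite ltrDl.
Qed.
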